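(* For all integers $0\le a<t\le T$, \[ G_a^{\lambda\mid t}=G_a^{\lambda\mid a+1}+\sum_{b=a+1}^{t-1}(\gamma\lambda)^{b-a}\,\delta'_{a,b}, \] where for $a\le b\le T-1$, $\delta'_{a,b}=\frac{\partial L_{b+1}}{\partial h_a}+\gamma\, g(h_{b+1};\theta_b)^\top\frac{\partial h_{b+1}}{\partial h_a}-g(h_b;\theta_{b-1})^\top\frac{\partial h_b}{\partial h_a}$.
   Context: Fix integers $d,p,T\ge1$. Hidden states $h_0,\dots,h_T\in\mathbb{R}^d$ are produced by a recurrent network $h_t=f(x_t,h_{t-1})$ with $f$ differentiable and inputs fixed; losses $L_t=\ell_t(h_t)$, $1\le t\le T$, with $\ell_t$ differentiable. For $0\le s\le\tau\le T$, $\partial h_\tau/\partial h_s\in\mathbb{R}^{d\times d}$ is the Jacobian of $h_\tau$ as a function of $h_s$ through the recursion (identity if $\tau=s$); for $s<\tau$, $\partial L_\tau/\partial h_s\in\mathbb{R}^d$ is the gradient of $L_\tau$ as a function of $h_s$; for $v\in\mathbb{R}^d$, $v^\top\partial h_\tau/\partial h_s$ means $(\partial h_\tau/\partial h_s)^\top v$. Let $g:\mathbb{R}^d\times\mathbb{R}^p\to\mathbb{R}^d$ be any map (the synthesiser), $\gamma,\lambda\in[0,1]$, and let $\theta_{-1},\theta_0,\dots,\theta_{T-1}\in\mathbb{R}^p$ be an arbitrary sequence of weight vectors. Convention $0^0=1$. The $n$-step synthetic gradient, for $k\ge0$, $n\ge1$, $k+n\le T$, is $G_k^{(n)}=\sum_{\tau=1}^{n}\gamma^{\tau-1}\frac{\partial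 L_{k+\tau}}{\partial h_k}+\gamma^n g(h_{k+n};\theta_{k+n-1})^\top\frac{\partial h_{k+n}}{\partial h_k}$, and the interim $\lambda$-weighted synthetic gradient, for $0\le k<H\le T$, is $G_k^{\lambda\mid H}=(1-\lambda)\sum_{n=1}^{H-k-1}\lambda^{n-1}G_k^{(n)}+\lambda^{H-k-1}G_k^{(H-k)}$. An empty sum is zero. *)

From HB Require Import structures.
From mathcomp Require Import all_boot all_order all_algebra.
From mathcomp Require Import all_classical all_reals all_analysis.
Set Implicit Arguments. Unset Strict Implicit. Unset Printing Implicit Defensive.
Import Order.TTheory GRing.Theory Num.Theory.
Import numFieldNormedType.Exports.
Local Open Scope ring_scope.

Section SynthGrad.
Context {R : realType} {d p : nat} {X : normedModType R}.

Local Notation V := 'cV[R]_d.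

Definition Jac (F : V -> V) (z : V) : 'M[R]_d :=
  \matrix_(i, j) ('d F z (delta_mx j 0) i 0).

Definition grad (F : V -> R) (z : V) : V :=
  \col_j ('d F z (delta_mx j 0)).

Fixpoint iterstep (F : nat -> V -> V) (s k : nat) (z : V) : V :=
  match k with
  | 0 => z
  | k'.+1 => F (s + k'.+1)%N (iterstep F s k' z)
  end.

Variables (f : X -> V -> V) (x : nat -> X) (h : nat -> V)
  (ell : nat -> V -> R) (g : V -> 'cV[R]_p -> V) (theta : int -> 'cV[R]_p)
  (gamma lambda : R).

(* h_tau as a function of h_s through the recursion h_t = f(x_t, h_{t-1}) *)
Definition flow (tau s : nat) : V -> V := iterstep (fun t => f (x t)) s (tau - s).

Definition dh (tau s : nat) : 'M[R]_d := Jac (flow tau s) (h s).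

Definition dL (tau s : nat) : V := grad (ell tau \o flow tau s) (h s).

(* v^T (partial h_tau / partial h_s) := (partial h_tau / partial h_s)^T v *)
Definition vtJ (v : V) (J : 'M[R]_d) : V := J^T *m v.

Definition Gn (k n : nat) : V :=
  \sum_(1 <= tau < n.+1) gamma ^+ tau.-1 *: dL (k + tau) k
  + gamma ^+ n *: vtJ (g (h (k + n)%N) (theta ((k + n)%:Z - 1))) (dh (k + n) k).

Definition Glam (k H : nat) : V :=
  (1 - lambda) *: \sum_(1 <= n < (H - k - 1).+1) lambda ^+ n.-1 *: Gn k n
  + lambda ^+ (H - k - 1) *: Gn k (H - k).

Definition delta' (a b : nat) : V :=
  dL b.+1 a + gamma *: vtJ (g (h b.+1) (theta b%:Z)) (dh b.+1 a)
  - vtJ (g (h b) (theta (b%:Z - 1))) (dh b a).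

End SynthGrad.

(* Both sides are finite combinations of the same vectors, so the identity is
   purely algebraic: consecutive n-step gradients differ by one TD-like term,
   G_k^(n+1) = G_k^(n) + gamma^n delta'_{k,k+n}, and raising the horizon of a
   lambda-weighted average of such a sequence by one adds exactly
   lambda^(m+1) times the new increment.  Telescoping over the horizon gives
   the claim; no analytic property of f, ell or g is needed. *)

From HB Require Import structures.
From mathcomp Require Import all_boot all_order all_algebra.
From mathcomp Require Import all_classical all_reals all_analysis.
From mathcomp Require Import ring.
Import Order.TTheory GRing.Theory Num.Theory.
Import numFieldNormedType.Exports.
Local Open Scope ring_scope.

Lemma lambda_mix_succ {R : comPzRingType} {V : lmodType R} (l : R)
    {G D : nat -> V} :
    (forall n, G n.+1 = G n + D n) -> forall m,
  (1 - l) *: \sum_(1 <= n < m.+2) l ^+ n.-1 *: G n + l ^+ m.+1 *: G m.+2 =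
  (1 - l) *: \sum_(1 <= n < m.+1) l ^+ n.-1 *: G n + l ^+ m *: G m.+1
  + l ^+ m.+1 *: D m.+1.
Proof.
move=> GS m; rewrite big_nat_recr //= (GS m.+1) scalerDr !scalerDr scalerA.
rewrite -!addrA; congr (_ + _); rewrite !addrA -scalerDl; congr (_ *: _ + _).
by rewrite exprS; ring.
Qed.

Section SyntheticGradients.
Context (R : realType) (d p : nat) (X : normedModType R)
  (f : X -> 'cV[R]_d -> 'cV[R]_d) (x : nat -> X) (h : nat -> 'cV[R]_d)
  (ell : nat -> 'cV[R]_d -> R) (g : 'cV[R]_d -> 'cV[R]_p -> 'cV[R]_d)
  (theta : int -> 'cV[R]_p) (gamma lambda : R).

Local Notation Gn := (Gn f x h ell g theta gamma).
Local Notation Glam := (Glam f x h ell g theta gamma lambda).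
Local Notation delta' := (delta' f x h ell g theta gamma).

Lemma Gn_succ k n : Gn k n.+1 = Gn k n + gamma ^+ n *: delta' k (k + n).
Proof.
rewrite /Gn /delta' big_nat_recr //= !addnS.
have -> : (k + n).+1%:Z - 1 = (k + n)%:Z by rewrite -addn1 PoszD addrK.
rewrite !scalerDr scalerN !scalerA -exprSr -!addrA; congr (_ + _).
by rewrite [RHS]addrCA subrKC.
Qed.

Lemma Glam_succ k t : (k < t)%N ->
  Glam k t.+1 = Glam k t + (gamma * lambda) ^+ (t - k) *: delta' k t.
Proof.
move=> lt_kt; have [m ->] : exists m, t = (k + m.+1)%N.
  by exists (t - k.+1)%N; rewrite addnS -addSn subnKC.
rewrite -addnS /Glam !addKn !subn1 /=.
rewrite (lambda_mix_succ lambda (Gn_succ k)).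
by rewrite scalerA exprMn [gamma ^+ _ * _]mulrC addnS.
Qed.

End SyntheticGradients.

Theorem lemma2 (R : realType) (d p T : nat) (X : normedModType R)
  (f : X -> 'cV[R]_d -> 'cV[R]_d) (x : nat -> X) (h : nat -> 'cV[R]_d)
  (ell : nat -> 'cV[R]_d -> R) (g : 'cV[R]_d -> 'cV[R]_p -> 'cV[R]_d)
  (theta : int -> 'cV[R]_p) (gamma lambda : R) :
  (0 < d)%N -> (0 < p)%N -> (0 < T)%N ->
  (forall (u : X) (z : 'cV[R]_d),
      differentiable (fun q : X * 'cV[R]_d => f q.1 q.2) (u, z)) ->
  (forall (t : nat) (z : 'cV[R]_d), differentiable (ell t) z) ->
  (forall t : nat, (1 <= t <= T)%N -> h t = f (x t) (h t.-1)) ->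
  0 <= gamma <= 1 -> 0 <= lambda <= 1 ->
  forall a t : nat, (a < t <= T)%N ->
    Glam f x h ell g theta gamma lambda a t =
    Glam f x h ell g theta gamma lambda a a.+1
    + \sum_(a.+1 <= b < t) (gamma * lambda) ^+ (b - a)
        *: delta' f x h ell g theta gamma a b.
Proof.
move=> _ _ _ _ _ _ _ _ a t /andP[+ _].
elim: t => // t IH; rewrite ltnS leq_eqVlt => /predU1P[<-|lt_at].
  by rewrite big_geq // addr0.
by rewrite Glam_succ // IH // big_nat_recr //= addrA.
Qed.
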